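(* Let $N\ge1$ and let $\mathcal A$ be an $(N,1,\mathbb L)$-$N$-CO-SF; let $\mathbb A$ be the set of its $N$ sequences. Partition $\mathbb A$ into disjoint nonempty subsets $\mathbb A^{(q)}$, $q\in Q$, such that within each subset all sequences have a common length $l_qN$ (with $l_q$ a positive integer) and a common energy. Index each subset arbitrarily as $\mathbb A^{(q)}=(\mathbf a^{(q)}_0,\dots,\mathbf a^{(q)}_{k_q-1})$ with $k_q=|\mathbb A^{(q)}|$. For each $q$, let $(\mathbf v^{(q),0},\dots,\mathbf v^{(q),k_q-1})$ be an arbitrary $(k_q,1,\mathbb L^{(q)})$-$k_q$-CO-SF, where $\mathbf v^{(q),m}$ has length $r_{q,m}k_q$ for a positive integer $r_{q,m}$. For $q\in Q$ and $0\le m<k_q$ define $$\mathbf s^{(q,m)}=\mathbf v^{(q),m}\odot\mathbb A^{(q)}=\big(v^{(q),m}_i\,\mathbf a^{(q)}_{[i]_{k_q}}\big)_{i=0}^{r_{q,m}k_q-1},$$ a sequence of length $r_{q,m}k_q\,l_qN$. Then the family of the $N$ sequences $\{\mathbf s^{(q,m)}\}_{q\in Q,\,0\le m<k_q}$ is an $(N,1,\mathbb L')$-$N$-CO-SF, where $\mathbb L'$ is the set of distinct values among $\{r_{q,m}k_ql_qN\}$.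
   Context: All sequences are finite complex sequences. A sequence $\mathbf s=(s_0,\dots,s_{L-1})$ of length $L$ is identified with the function $s:\mathbb Z\to\mathbb C$ given by $s(n)=s_n$ for $0\le n<L$ and $s(n)=0$ otherwise. For sequences $\mathbf s,\mathbf s'$ of lengths $L,L'$ (possibly different), the aperiodic correlation is $R_{\mathbf s,\mathbf s'}(\tau)=\sum_{l=0}^{L-1}s(l)\,\overline{s'(l+\tau)}$ for $\tau\in\mathbb Z$. The energy of $\mathbf s$ is $E_{\mathbf s}=R_{\mathbf s,\mathbf s}(0)$. An $(M,1,\mathbb L)$-$N$-shift cross-orthogonal sequence family ($N$-CO-SF) is an indexed family $(\mathbf s^0,\dots,\mathbf s^{M-1})$ of complex sequences, where $\mathbf s^m$ has length $L^{(m)}$ divisible by $N$, and $\mathbb L$ is the set of distinct values among $L^{(0)},\dots,L^{(M-1)}$, such that for all $0\le m,m'<M$ and all $k\in\mathbb Z$, $R_{\mathbf s^m,\mathbf s^{m'}}(kN)=E_{\mathbf s^m}\,\delta(m-m')\,\delta(k)$, where $\delta$ is the Kronecker delta. Connection operator: for a vector $\mathbf v=(v_0,\dots,v_{K'-1})$ and an indexed set $\mathbb A=(\mathbf a_0,\dots,\mathbf a_{M-1})$ of $M$ sequences of common length $L$, with $K=\mathrm{lcm}(M,K')$, $\mathbf v\odot\mathbb A$ is the length-$KL$ concatenation $\big(v_{[k]_{K'}}\mathbf a_{[k]_M}\big)_{k=0}^{K-1}$, where $[a]_b$ is the remainder of $a$ modulo $b$. *)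

(* Complex numbers are modelled by an arbitrary
   numClosedFieldType C (with its conjugation Num.conj). *)
From HB Require Import structures.
From mathcomp Require Import all_boot all_order all_algebra.
Set Implicit Arguments. Unset Strict Implicit. Unset Printing Implicit Defensive.
Import Order.TTheory GRing.Theory Num.Theory.
Local Open Scope ring_scope.

Definition seqval (C : numClosedFieldType) (s : seq C) (n : int) : C :=
  match n with Posz k => nth 0 s k | Negz _ => 0 end.

Definition acorr (C : numClosedFieldType) (s s' : seq C) (tau : int) : C :=
  \sum_(l < size s) nth 0 s l * Num.conj (seqval s' (Posz l + tau)).

Definition energy (C : numClosedFieldType) (s : seq C) : C := acorr s s 0.

(* (M,1,L)-N-shift cross-orthogonal sequence family, indexed by a finite
   type I with #|I| = M; the set L of lengths is determined by the family. *)
Definition is_COSF (C : numClosedFieldType) (N M : nat) (I : finType)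
  (S : I -> seq C) : Prop :=
  #|I| = M /\
  (forall m, (N %| size (S m))%N) /\
  (forall (m m' : I) (k : int),
     acorr (S m) (S m') (k * (N%:Z)) =
       if (m == m') && (k == 0) then energy (S m) else 0).

(* connection operator v (.) A for A = (a_0,...,a_{M-1}) given as a list *)
Definition connect_op (C : numClosedFieldType) (v : seq C) (As : seq (seq C))
  : seq C :=
  flatten (mkseq (fun i => map (fun x => nth 0 v (i %% size v) * x)
                              (nth [::] As (i %% size As)))
                 (lcmn (size As) (size v))).

From HB Require Import structures.
From mathcomp Require Import all_boot all_order all_algebra.
Import Order.TTheory GRing.Theory Num.Theory.
Local Open Scope ring_scope.

(* A connected sequence v (.) As is a concatenation of blocks, block i being
   v_i times the base sequence a_(i mod k), all blocks of length l N.  Hence the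
   correlation at a shift t N of two connected sequences is a double sum over
   pairs of blocks of v_i conj(w_i') times a correlation of base sequences at a
   shift (t + i l - i' l) N.  For base sequences from different groups all these
   vanish.  Within one group only pairs with i = i' mod k and i' = i + t / l
   survive, which forces k l | t and collapses the sum to E R_{v,w}(t / l),
   with t / l a multiple of k; the CO-SF property of the v's then concludes. *)

Section Correlation.
Context {C : numClosedFieldType}.
Implicit Types (s a b w : seq C) (bs : seq (seq C)) (n tau : int).

Lemma seqval_neg s n : n < 0 -> seqval s n = 0.
Proof. by case: n. Qed.

Lemma seqval_nil n : seqval [::] n = 0 :> C.
Proof. by case: n => [[]|]. Qed.

Lemma seqvalE s n :
  seqval s n = \sum_(i < size s) (if i%:Z == n then nth 0 s i else 0).
Proof.
case: n => [p|p] /=; last by rewrite big1.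
have [lt_p|le_p] := ltnP p (size s).
  rewrite (bigD1 (Ordinal lt_p)) //= eqxx big1 ?addr0 // => j ne_j.
  by rewrite eqz_nat; case: eqP => // eq_jp; case/eqP: ne_j; apply: val_inj.
rewrite nth_default // big1 // => j _.
by rewrite eqz_nat ltn_eqF // (leq_trans (ltn_ord j)).
Qed.

Lemma seqval_cat a b n :
  seqval (a ++ b) n = seqval a n + seqval b (n - (size a)%:Z).
Proof.
case: n => [p|p] /=; last first.
  by rewrite add0r seqval_neg // (le_lt_trans _ (isT : Negz p < 0)) // lerBlDr lerDl.
have [lt_p|le_p] := ltnP p (size a).
  by rewrite nth_cat lt_p seqval_neg ?addr0 // subr_lt0 ltz_nat.
by rewrite nth_cat ltnNge le_p /= (nth_default 0 le_p) add0r subzn.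
Qed.

Lemma acorr_catl a b w tau :
  acorr (a ++ b) w tau = acorr a w tau + acorr b w (tau + (size a)%:Z).
Proof.
rewrite /acorr size_cat big_split_ord /=; congr (_ + _).
  by apply: eq_bigr => i _; rewrite nth_cat ltn_ord.
apply: eq_bigr => i _; rewrite nth_cat ltnNge leq_addr /= addKn PoszD.
by rewrite (addrC tau) addrA (addrC (Posz i)).
Qed.

Lemma size_flatten_const L bs :
  {in bs, forall b, size b = L} -> size (flatten bs) = (size bs * L)%N.
Proof.
elim: bs => [|b bs IH] //= sz_bs.
by rewrite size_cat IH ?sz_bs ?mem_head // => x bs_x; rewrite sz_bs ?inE ?bs_x ?orbT.
Qed.

Lemma seqval_flatten L bs n :
  {in bs, forall b, size b = L} ->
  seqval (flatten bs) n = \sum_(i < size bs) seqval (nth [::] bs i) (n - (i * L)%N%:Z).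
Proof.
elim: bs n => [|b bs IH] n sz_bs /=; first by rewrite big_ord0 seqval_nil.
rewrite seqval_cat IH; last by move=> x bs_x; rewrite sz_bs ?inE ?bs_x ?orbT.
rewrite big_ord_recl /= mul0n subr0 sz_bs ?mem_head //; congr (_ + _).
apply: eq_bigr => i _.
by rewrite /bump add1n mulSn PoszD opprD addrA.
Qed.

Lemma acorr_flattenl L bs w tau :
  {in bs, forall b, size b = L} ->
  acorr (flatten bs) w tau = \sum_(i < size bs) acorr (nth [::] bs i) w (tau + (i * L)%N%:Z).
Proof.
elim: bs tau => [|b bs IH] tau sz_bs /=; first by rewrite big_ord0 /acorr big_ord0.
rewrite acorr_catl IH; last by move=> x bs_x; rewrite sz_bs ?inE ?bs_x ?orbT.
rewrite big_ord_recl /= mul0n addr0 sz_bs ?mem_head //; congr (_ + _).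
by apply: eq_bigr => i _; rewrite /bump add1n mulSn PoszD addrA.
Qed.

Lemma acorr_flattenr L a bs tau :
  {in bs, forall b, size b = L} ->
  acorr a (flatten bs) tau = \sum_(i < size bs) acorr a (nth [::] bs i) (tau - (i * L)%N%:Z).
Proof.
move=> sz_bs; rewrite /acorr.
under eq_bigr do rewrite (seqval_flatten _ _ _ sz_bs) rmorph_sum mulr_sumr.
by rewrite exchange_big; apply: eq_bigr => i _; apply: eq_bigr => j _; rewrite addrA.
Qed.

Lemma acorr_scalel c a b tau :
  acorr (map (fun x => c * x) a) b tau = c * acorr a b tau.
Proof.
by rewrite /acorr size_map mulr_sumr; apply: eq_bigr => i _; rewrite (nth_map 0) ?mulrA.
Qed.

Lemma seqval_scale c b n : seqval (map (fun x => c * x) b) n = c * seqval b n.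
Proof.
case: n => [p|p] /=; last by rewrite mulr0.
have [lt_p|le_p] := ltnP p (size b); first by rewrite (nth_map 0).
by rewrite !nth_default ?mulr0 ?size_map.
Qed.

Lemma acorr_scaler c a b tau :
  acorr a (map (fun x => c * x) b) tau = c^* * acorr a b tau.
Proof.
by rewrite /acorr mulr_sumr; apply: eq_bigr => i _; rewrite seqval_scale rmorphM mulrCA.
Qed.

Lemma mkseq_size_const (F : nat -> seq C) R L :
  (forall i, (i < R)%N -> size (F i) = L) -> {in mkseq F R, forall b, size b = L}.
Proof. by move=> sz_F b /mapP [i]; rewrite mem_iota add0n => /sz_F + ->. Qed.

Lemma acorr_blocks (f g : nat -> seq C) (c d : nat -> C) R R' L L' tau :
  (forall i, (i < R)%N -> size (f i) = L) ->
  (forall i, (i < R')%N -> size (g i) = L') ->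
  acorr (flatten (mkseq (fun i => map (fun x => c i * x) (f i)) R))
        (flatten (mkseq (fun i => map (fun x => d i * x) (g i)) R')) tau
  = \sum_(i < R) \sum_(i' < R')
      c i * (d i')^* * acorr (f i) (g i') (tau + (i * L)%N%:Z - (i' * L')%N%:Z).
Proof.
move=> sz_f sz_g.
rewrite (acorr_flattenl L); last by apply: mkseq_size_const => i /sz_f; rewrite size_map.
rewrite size_mkseq; apply: eq_bigr => i _.
rewrite nth_mkseq // acorr_scalel (acorr_flattenr L'); last first.
  by apply: mkseq_size_const => j /sz_g; rewrite size_map.
rewrite size_mkseq mulr_sumr; apply: eq_bigr => j _.
by rewrite nth_mkseq // acorr_scaler mulrA.
Qed.


(* Block i (of length l N, base index i mod k) faces block i' at relative shift
   t N with the same base sequence and zero shift exactly when this holds. *)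
Lemma block_match (k l i i' : nat) (t : int) : (0 < k)%N -> (0 < l)%N ->
  ((i %% k == i' %% k)%N && (t + (i * l)%N%:Z - (i' * l)%N%:Z == 0))
  = ((k * l)%N%:Z %| t)%Z && (i'%:Z == i%:Z + (t %/ l)%Z).
Proof.
move=> k_gt0 l_gt0; have l_neq0 : l%:Z != 0 by rewrite eqz_nat -lt0n.
have [t_eq|t_neq] := eqVneq (t + (i * l)%N%:Z - (i' * l)%N%:Z) 0; last first.
  rewrite andbF; apply/esym/negbTE/andP => -[kl_t /eqP i'_eq].
  have l_t : (l%:Z %| t)%Z by apply: dvdz_trans kl_t; rewrite PoszM dvdz_mull.
  by case/eqP: t_neq; rewrite !PoszM i'_eq mulrDl divzK // [t + _]addrC subrr.
move/eqP: t_eq; rewrite subr_eq0 => /eqP t_eq.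
have -> : t = (i'%:Z - i%:Z) * l%:Z by rewrite mulrBl -!PoszM -t_eq addrK.
rewrite mulzK // [i%:Z + _]addrC subrK eqxx !andbT.
by rewrite PoszM dvdz_mul2r // -eqz_mod_dvd !modz_nat eqz_nat eq_sym.
Qed.

Context {N : nat}.
Implicit Types (v : seq C) (As Bs : seq (seq C)).

Lemma connect_opE v As : (size As %| size v)%N ->
  connect_op v As =
  flatten (mkseq (fun i => map (fun x => nth 0 v i * x) (nth [::] As (i %% size As)))
                 (size v)).
Proof.
move=> As_v; rewrite /connect_op (lcmn_idPr As_v); congr flatten.
by apply/eq_in_map => i; rewrite mem_iota add0n => /andP [_ /modn_small ->].
Qed.

Lemma size_connect_op L v As :
  (0 < size As)%N -> (size As %| size v)%N -> {in As, forall a, size a = L} ->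
  size (connect_op v As) = (size v * L)%N.
Proof.
move=> As_gt0 As_v sz_As; rewrite connect_opE // (size_flatten_const L) ?size_mkseq //.
by apply: mkseq_size_const => i _; rewrite size_map sz_As // mem_nth // ltn_pmod.
Qed.

Lemma acorr_connect_op l l' v w As Bs t :
  (0 < size As)%N -> (0 < size Bs)%N -> (size As %| size v)%N -> (size Bs %| size w)%N ->
  {in As, forall a, size a = (l * N)%N} -> {in Bs, forall b, size b = (l' * N)%N} ->
  acorr (connect_op v As) (connect_op w Bs) (t * N%:Z) =
  \sum_(i < size v) \sum_(i' < size w) nth 0 v i * (nth 0 w i')^* *
    acorr (nth [::] As (i %% size As)) (nth [::] Bs (i' %% size Bs))
          ((t + (i * l)%N%:Z - (i' * l')%N%:Z) * N%:Z).
Proof.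
move=> As_gt0 Bs_gt0 As_v Bs_w sz_As sz_Bs.
rewrite !connect_opE // (acorr_blocks _ _ _ _ _ _ (l * N) (l' * N)); last 2 first.
- by move=> i _; rewrite sz_As // mem_nth // ltn_pmod.
- by move=> i _; rewrite sz_Bs // mem_nth // ltn_pmod.
apply: eq_bigr => i _; apply: eq_bigr => i' _.
by rewrite !PoszM mulrBl mulrDl !mulrA.
Qed.

Lemma acorr_connect_op_orth l l' v w As Bs t :
  (0 < size As)%N -> (0 < size Bs)%N -> (size As %| size v)%N -> (size Bs %| size w)%N ->
  {in As, forall a, size a = (l * N)%N} -> {in Bs, forall b, size b = (l' * N)%N} ->
  (forall j j' u, (j < size As)%N -> (j' < size Bs)%N ->
     acorr (nth [::] As j) (nth [::] Bs j') (u * N%:Z) = 0) ->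
  acorr (connect_op v As) (connect_op w Bs) (t * N%:Z) = 0.
Proof.
move=> As_gt0 Bs_gt0 As_v Bs_w sz_As sz_Bs orth.
rewrite (acorr_connect_op l l') //; apply: big1 => i _; apply: big1 => i' _.
by rewrite orth ?mulr0 ?ltn_pmod.
Qed.

Lemma acorr_connect_op_same E l v w As t :
  (0 < size As)%N -> (0 < l)%N -> (size As %| size v)%N -> (size As %| size w)%N ->
  {in As, forall a, size a = (l * N)%N} ->
  (forall j j' u, (j < size As)%N -> (j' < size As)%N ->
     acorr (nth [::] As j) (nth [::] As j') (u * N%:Z) =
       if (j == j') && (u == 0) then E else 0) ->
  acorr (connect_op v As) (connect_op w As) (t * N%:Z) =
    if ((size As * l)%N%:Z %| t)%Z then E * acorr v w (t %/ l)%Z else 0.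
Proof.
move=> As_gt0 l_gt0 As_v As_w sz_As cosf.
rewrite (acorr_connect_op l l) //.
under eq_bigr do under eq_bigr do rewrite cosf ?ltn_pmod // block_match //.
case: ifP => _; last by apply: big1 => i _; apply: big1 => i' _; rewrite mulr0.
rewrite /acorr mulr_sumr; apply: eq_bigr => i _.
rewrite seqvalE rmorph_sum !mulr_sumr; apply: eq_bigr => i' _.
by rewrite andTb; case: ifP => _; rewrite ?rmorph0 ?mulr0 // mulrC.
Qed.

End Correlation.

Theorem theorem3 (C : numClosedFieldType) (N : nat) (HN : (1 <= N)%N)
  (A : 'I_N -> seq C) (HA : is_COSF N N A)
  (Q : finType) (k : Q -> nat) (Hk : forall q, (0 < k q)%N)
  (idx : {q : Q & 'I_(k q)} -> 'I_N) (Hidx : bijective idx)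
  (l : Q -> nat) (Hl : forall q, (0 < l q)%N)
  (Hlen : forall q (j : 'I_(k q)), size (A (idx (Tagged _ j))) = (l q * N)%N)
  (Hen : forall q (j j' : 'I_(k q)),
     energy (A (idx (Tagged _ j))) = energy (A (idx (Tagged _ j'))))
  (V : forall q, 'I_(k q) -> seq C) (HV : forall q, is_COSF (k q) (k q) (V q))
  (r : forall q, 'I_(k q) -> nat) (Hr : forall q m, (0 < r q m)%N)
  (HVlen : forall q m, size (V q m) = (r q m * k q)%N) :
  is_COSF N N (fun qm : {q : Q & 'I_(k q)} =>
    connect_op (V (tag qm) (tagged qm))
      [seq A (idx (Tagged (fun q => 'I_(k q)) j)) | j <- enum 'I_(k (tag qm))]).
Proof.
have [_ [_ corrA]] := HA.
pose fam q := [seq A (idx (Tagged (fun q => 'I_(k q)) j)) | j <- enum 'I_(k q)].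
have size_fam q : size (fam q) = k q by rewrite size_map size_enum_ord.
have nth_fam q j (lt_j : (j < k q)%N) :
    nth [::] (fam q) j = A (idx (Tagged _ (Ordinal lt_j))).
  rewrite (nth_map (Ordinal lt_j)) ?size_enum_ord //; congr (A (idx (Tagged _ _))).
  by apply: val_inj; rewrite /= nth_enum_ord.
have sz_fam q : {in fam q, forall a, size a = (l q * N)%N}.
  by move=> a /mapP [j _ ->]; apply: Hlen.
have fam_gt0 q : (0 < size (fam q))%N by rewrite size_fam.
have fam_V q m : (size (fam q) %| size (V q m))%N by rewrite size_fam HVlen dvdn_mull.
split; first by rewrite (bij_eq_card Hidx) card_ord.
split=> [[q m] | [q m] [q' m'] t].
  by rewrite /= -/(fam q) (size_connect_op (l q * N)) // mulnA dvdn_mull.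
case: ifP => [/andP [/eqP <- /eqP ->] | not_diag]; first by rewrite mul0r.
rewrite /= -/(fam q) -/(fam q'); have [eq_q | neq_q] := eqVneq q q'; last first.
  apply: (acorr_connect_op_orth (l q) (l q')) => // j j' u lt_j lt_j'.
  rewrite !size_fam in lt_j lt_j'.
  rewrite (nth_fam _ _ lt_j) (nth_fam _ _ lt_j') corrA (inj_eq (bij_inj Hidx)).
  by case: eqP => // /(congr1 tag) /= eq_q; rewrite eq_q eqxx in neq_q.
subst q'; set E := energy (A (idx (Tagged _ (Ordinal (Hk q))))).
rewrite (acorr_connect_op_same E (l q)) //; last first.
  move=> j j' u lt_j lt_j'; rewrite !size_fam in lt_j lt_j'.
  rewrite (nth_fam _ _ lt_j) (nth_fam _ _ lt_j') corrA (inj_eq (bij_inj Hidx)) eq_Tagged.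
  by rewrite (Hen _ _ (Ordinal (Hk q))).
case: ifP => // /dvdzP [D t_def]; have [_ [_ corrV]] := HV q.
rewrite t_def size_fam PoszM mulrA mulzK ?eqz_nat -?lt0n // corrV.
case: ifP => [/andP [eq_m /eqP D0] | _]; last by rewrite mulr0.
by move: not_diag; rewrite eq_Tagged eq_m t_def D0 mul0r eqxx.
Qed.
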